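(* Let $\Gamma$ be a gain operator on $\ell^\infty_+(\mathcal I)$ and suppose there is a path $\sigma:\mathbb R_+\to\ell^\infty_+(\mathcal I)$ that is continuous (in norm) and satisfies: (i) there is $\tilde\rho\in\mathcal K_\infty$ with $\Gamma_{\tilde\rho}(\sigma(r))\le\sigma(r)$ for all $r\ge0$; (ii) there are $\varphi_{\min},\varphi_{\max}\in\mathcal K_\infty$ with $\varphi_{\min}(r)\mathbf 1\le\sigma(r)\le\varphi_{\max}(r)\mathbf 1$ for all $r\ge0$ ($\sigma$ need not be increasing; in particular this holds if $\Gamma$ admits a $C^0$-path of strict decay). Then there is $\rho\in\mathcal K_\infty$ such that (a) $\Sigma(\Gamma_\rho)$ is UGAS, and (b) $\Gamma_\rho$ satisfies the $\oplus$-MBI property.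
   Context: Let $\mathcal I$ be a nonempty countable index set; $\ell^\infty_+(\mathcal I)$ is the cone of nonnegative real families $s=(s_i)_{i\in\mathcal I}$ with $\|s\|:=\sup_i|s_i|<\infty$, ordered componentwise; $\mathbf 1$ is the all-ones vector; $\oplus$ is the componentwise maximum. $\mathcal K$: continuous strictly increasing $\gamma:\mathbb R_+\to\mathbb R_+$ with $\gamma(0)=0$; $\mathcal K_\infty$: unbounded elements of $\mathcal K$, acting on $\ell^\infty_+(\mathcal I)$ componentwise; $\mathcal{KL}$: continuous $\beta:\mathbb R_+^2\to\mathbb R_+$ with $\beta(\cdot,t)\in\mathcal K$ and $\beta(r,\cdot)$ continuous strictly decreasing to $0$ for $r>0$. For $\mathcal J\subset\mathcal I$, $s_{|\mathcal J}$ agrees with $s$ on $\mathcal J$ and is $0$ elsewhere. Gain operator: for each $i$ a finite (possibly empty) $\mathcal I_i\subset\mathcal I\setminus\{i\}$; directed graph $\mathcal G$ with vertices $\mathcal I$ and edges $ji$, $j\in\mathcal I_i$; a pointwise equicontinuous family $\gamma_{ij}\in\mathcal K_\infty$ ($ji\in E(\mathcal G)$); functions $\mu_i:\ell^\infty_+(\mathcal I)\to[0,\infty]$ with (M1) some $\xi\in\mathcal K_\infty$ has $\mu_i(0)=0$, $\mu_i(s)\ge\xi(\|s\|)$; (M2) $\mu_i$ monotone; (M3) for each finite $\mathcal J$, $\mu_i$ restricted to vectors vanishing off $\mathcal J$ is finite-valued and continuous; (M4) for each norm-bounded $A$ and $\varepsilon>0$ there is $\delta>0$ with $\sup_i|\mu_i(s_{|\mathcal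 I_i})-\mu_i(s^0_{|\mathcal I_i})|\le\varepsilon$ whenever $s^0\in A$, $\|s-s^0\|\le\delta$. $\Gamma_i(s):=\mu_i([\gamma_{ij}(s_j)]_{j\in\mathcal I_i})$ (argument zero outside $\mathcal I_i$). $\Gamma_\rho:=(\mathrm{id}+\rho)\circ\Gamma$. A $C^0$-path of strict decay is a path $\sigma$ satisfying (i), (ii) above, being increasing ($r_1\le r_2\Rightarrow\sigma(r_1)\le\sigma(r_2)$) and norm-continuous. $\Sigma(T)$ is the system $s^{n+1}=T(s^n)$; it is UGAS if $\|T^n(s)\|\le\beta(\|s\|,n)$ for some $\beta\in\mathcal{KL}$ and all $s,n$. A monotone $T$ has the $\oplus$-MBI property if there is $\varphi\in\mathcal K_\infty$ such that for all $s,b$, $s\le b\oplus T(s)$ implies $\|s\|\le\varphi(\|b\|)$. *)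

From Stdlib Require Import Reals Lra List ClassicalDescription.
From Coquelicot Require Import Coquelicot.
Open Scope R_scope.

Definition nrm {I : Type} (s : I -> R) : R :=
  real (Lub_Rbar (fun x => exists i, x = Rabs (s i))).

Definition linf_plus {I : Type} (s : I -> R) : Prop :=
  (forall i, 0 <= s i) /\ exists M, forall i, s i <= M.

Definition vsub {I : Type} (s t : I -> R) : I -> R := fun i => s i - t i.

Definition restr {I : Type} (J : list I) (s : I -> R) : I -> R :=
  fun j => if excluded_middle_informative (In j J) then s j else 0.

Definition vanishes_off {I : Type} (J : list I) (s : I -> R) : Prop :=
  forall j, ~ In j J -> s j = 0.

Definition cont_Rplus (g : R -> R) : Prop :=
  forall x, 0 <= x -> forall eps, 0 < eps -> exists delta, 0 < delta /\
    forall y, 0 <= y -> Rabs (y - x) < delta -> Rabs (g y - g x) < eps.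

Definition class_K (g : R -> R) : Prop :=
  cont_Rplus g /\ g 0 = 0 /\
  (forall x y, 0 <= x -> x < y -> g x < g y) /\
  (forall x, 0 <= x -> 0 <= g x).

Definition class_Kinf (g : R -> R) : Prop :=
  class_K g /\ (forall M, exists x, 0 <= x /\ M < g x).

Definition class_KL (b : R -> R -> R) : Prop :=
  (forall r t, 0 <= r -> 0 <= t -> forall eps, 0 < eps -> exists delta, 0 < delta /\
     forall r' t', 0 <= r' -> 0 <= t' -> Rabs (r' - r) < delta -> Rabs (t' - t) < delta ->
       Rabs (b r' t' - b r t) < eps) /\
  (forall r t, 0 <= r -> 0 <= t -> 0 <= b r t) /\
  (forall t, 0 <= t -> class_K (fun r => b r t)) /\
  (forall r, 0 < r ->
     cont_Rplus (b r) /\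
     (forall t t', 0 <= t -> t < t' -> b r t' < b r t) /\
     (forall eps, 0 < eps -> exists T, forall t, T <= t -> b r t < eps)).

(** Gain operator data.
    Ii i : the finite set I_i (a list), i notin I_i;
    gam i j : gamma_{ij} (for j in I_i, i.e. edge ji);
    mu i : mu_i : l^oo_+(I) -> [0, +oo] (Rbar valued). *)
Definition is_gain_operator {I : Type} (Ii : I -> list I) (gam : I -> I -> R -> R)
    (mu : I -> (I -> R) -> Rbar) : Prop :=
  (forall i, ~ In i (Ii i)) /\
  (forall i j, In j (Ii i) -> class_Kinf (gam i j)) /\
  (forall r, 0 <= r -> forall eps, 0 < eps -> exists delta, 0 < delta /\
     forall i j, In j (Ii i) -> forall r', 0 <= r' -> Rabs (r' - r) < delta ->
       Rabs (gam i j r' - gam i j r) < eps) /\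
  (forall i s, linf_plus s -> Rbar_le (Finite 0) (mu i s)) /\
  (exists xi, class_Kinf xi /\ forall i,
     mu i (fun _ => 0) = Finite 0 /\
     forall s, linf_plus s -> Rbar_le (Finite (xi (nrm s))) (mu i s)) /\
  (forall i s t, linf_plus s -> linf_plus t -> (forall j, s j <= t j) ->
     Rbar_le (mu i s) (mu i t)) /\
  (forall i (J : list I),
     (forall s, linf_plus s -> vanishes_off J s -> is_finite (mu i s)) /\
     (forall s, linf_plus s -> vanishes_off J s ->
        forall eps, 0 < eps -> exists delta, 0 < delta /\
        forall t, linf_plus t -> vanishes_off J t -> nrm (vsub t s) < delta ->
          Rabs (real (mu i t) - real (mu i s)) < eps)) /\
  (forall (A : (I -> R) -> Prop),
     (forall s, A s -> linf_plus s) -> (exists M, forall s, A s -> nrm s <= M) ->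
     forall eps, 0 < eps -> exists delta, 0 < delta /\
       forall s0 s, A s0 -> linf_plus s -> nrm (vsub s s0) <= delta ->
         forall i, Rabs (real (mu i (restr (Ii i) s)) - real (mu i (restr (Ii i) s0))) <= eps).

(** Gamma_i(s) = mu_i([gamma_ij(s_j)]_{j in I_i}) (zero outside I_i); finite by (M3). *)
Definition Gam {I : Type} (Ii : I -> list I) (gam : I -> I -> R -> R)
    (mu : I -> (I -> R) -> Rbar) (s : I -> R) : I -> R :=
  fun i => real (mu i (fun j => if excluded_middle_informative (In j (Ii i))
                                 then gam i j (s j) else 0)).

Definition Gam_rho {I : Type} (Ii : I -> list I) (gam : I -> I -> R -> R)
    (mu : I -> (I -> R) -> Rbar) (rho : R -> R) (s : I -> R) : I -> R :=
  fun i => Gam Ii gam mu s i + rho (Gam Ii gam mu s i).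

Definition UGAS {I : Type} (T : (I -> R) -> (I -> R)) : Prop :=
  exists beta, class_KL beta /\
    forall s, linf_plus s -> forall n : nat, nrm (Nat.iter n T s) <= beta (nrm s) (INR n).

Definition oplus_MBI {I : Type} (T : (I -> R) -> (I -> R)) : Prop :=
  exists phi, class_Kinf phi /\
    forall s b, linf_plus s -> linf_plus b ->
      (forall i, s i <= Rmax (b i) (T s i)) -> nrm s <= phi (nrm b).

From Stdlib Require Import Reals Lra Lia ZArith List Classical ClassicalDescription.
From Stdlib Require ClassicalEpsilon.
From Coquelicot Require Import Coquelicot.
Open Scope R_scope.

(* Take rho := rho_t / 2.  Then Gamma_rho (sigma r) <= sigma r - eta uniformly for r >= a > 0,
   so by continuity of sigma, x <= sigma r implies Gamma_rho x <= sigma r' for every r' slightly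
   below r.  A real-induction argument therefore pushes r down to any a >= 0: starting from
   sigma r0 it shows that the iterates of sigma r0 tend to 0, and for a solution of
   s <= b (+) Gamma_rho s (where b <= sigma r' as long as r' >= phimin^-1 |b|) it yields the
   MBI gain phimax o phimin^-1.  Every s lies below sigma (phimin^-1 k) for k >= |s|, so by
   monotonicity its iterates are dominated by a family of sequences decaying to 0, indexed by
   such k, and this family is packaged into a KL function. *)

Definition vle {I : Type} (s t : I -> R) : Prop := forall i, s i <= t i.
Definition vnonneg {I : Type} (s : I -> R) : Prop := forall i, 0 <= s i.

Section SupNorm.

Context {I : Type}.

Lemma nrm_nonneg (s : I -> R) : 0 <= nrm s.
Proof.
  unfold nrm.
  destruct (Lub_Rbar_correct (fun x => exists i, x = Rabs (s i))) as [Hub Hlub].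
  destruct (Lub_Rbar _) as [l| |] eqn:E; simpl; try lra.
  destruct (classic (exists i : I, True)) as [[i _]|Hempty].
  - specialize (Hub (Rabs (s i)) (ex_intro _ i eq_refl)). simpl in Hub.
    pose proof (Rabs_pos (s i)). lra.
  - enough (Rbar_le (Finite l) m_infty) by contradiction.
    apply Hlub. intros x [i _]. exfalso. eauto.
Qed.

Lemma nrm_le (s : I -> R) (M : R) :
  0 <= M -> (forall i, Rabs (s i) <= M) -> nrm s <= M.
Proof.
  intros HM Hs. unfold nrm.
  destruct (Lub_Rbar_correct (fun x => exists i, x = Rabs (s i))) as [_ Hlub].
  assert (Hle : Rbar_le (Lub_Rbar (fun x => exists i, x = Rabs (s i))) (Finite M)).
  { apply Hlub. intros x [i ->]. apply Hs. }
  destruct (Lub_Rbar _); simpl in *; lra || contradiction.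
Qed.

Lemma Rabs_le_nrm (s : I -> R) (i : I) :
  (exists M, forall j, Rabs (s j) <= M) -> Rabs (s i) <= nrm s.
Proof.
  intros [M HM]. unfold nrm.
  destruct (Lub_Rbar_correct (fun x => exists i, x = Rabs (s i))) as [Hub Hlub].
  assert (Hle : Rbar_le (Lub_Rbar (fun x => exists i, x = Rabs (s i))) (Finite M)).
  { apply Hlub. intros x [j ->]. apply HM. }
  specialize (Hub (Rabs (s i)) (ex_intro _ i eq_refl)).
  destruct (Lub_Rbar _); simpl in *; lra || contradiction.
Qed.

Lemma nrm_le_nonneg (s : I -> R) (M : R) :
  vnonneg s -> (forall i, s i <= M) -> 0 <= M -> nrm s <= M.
Proof.
  intros Hs HsM HM. apply nrm_le; auto.
  intros i. rewrite Rabs_pos_eq; auto.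
Qed.

Lemma le_nrm (s : I -> R) (i : I) : linf_plus s -> s i <= nrm s.
Proof.
  intros [Hs [M HM]]. rewrite <- (Rabs_pos_eq (s i)) by auto.
  apply Rabs_le_nrm. exists M. intros j. rewrite Rabs_pos_eq; auto.
Qed.

Lemma nrm_mono (s t : I -> R) : vnonneg s -> linf_plus t -> vle s t -> nrm s <= nrm t.
Proof.
  intros Hs Ht Hst. apply nrm_le_nonneg; auto using nrm_nonneg.
  intros i. apply (Rle_trans _ (t i)); auto using le_nrm.
Qed.

End SupNorm.

Lemma continuity_Rmax0_comp (f : R -> R) : cont_Rplus f -> continuity (fun x => f (Rmax x 0)).
Proof.
  intros Hf x eps Heps. unfold dist; simpl; unfold R_dist.
  destruct (Rlt_le_dec x 0) as [Hx|Hx].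
  - exists (- x). split; [lra|]. intros y [_ Hy]. apply Rabs_def2 in Hy.
    rewrite !Rmax_right, Rminus_diag, Rabs_R0 by lra. lra.
  - destruct (Hf x Hx eps Heps) as [d [Hd Hfd]]. exists d. split; auto.
    intros y [_ Hy]. rewrite (Rmax_left x 0) by lra. apply Hfd; [apply Rmax_r|].
    unfold Rmax. destruct Rle_dec; [|auto].
    apply Rabs_def2 in Hy. rewrite Rabs_left1; lra.
Qed.

(* Arbitrary on negative arguments. *)
Definition Kinv (g : R -> R) (y : R) : R :=
  ClassicalEpsilon.epsilon (inhabits 0) (fun x => 0 <= x /\ g x = y).

Section KinfBasics.

Variable g : R -> R.
Hypothesis Hg : class_Kinf g.

Lemma Kinf_cont : cont_Rplus g.
Proof. apply Hg. Qed.

Lemma Kinf_0 : g 0 = 0.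
Proof. apply Hg. Qed.

Lemma Kinf_lt x y : 0 <= x -> x < y -> g x < g y.
Proof. apply Hg. Qed.

Lemma Kinf_nonneg x : 0 <= x -> 0 <= g x.
Proof. apply Hg. Qed.

Lemma Kinf_unbounded M : exists x, 0 <= x /\ M < g x.
Proof. apply Hg. Qed.

Lemma Kinf_le x y : 0 <= x -> x <= y -> g x <= g y.
Proof.
  intros Hx [Hxy| ->]; [left; apply Kinf_lt|]; auto with real.
Qed.

Lemma Kinf_pos x : 0 < x -> 0 < g x.
Proof. intros Hx. rewrite <- Kinf_0. apply Kinf_lt; lra. Qed.

Lemma Kinf_small eps : 0 < eps -> exists d, 0 < d /\ forall x, 0 <= x < d -> g x < eps.
Proof.
  intros Heps. destruct (Kinf_cont 0 (Rle_refl 0) eps Heps) as [d [Hd Hcont]].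
  exists d. split; auto. intros x [Hx Hxd].
  specialize (Hcont x Hx). rewrite Kinf_0, !Rminus_0_r, !Rabs_pos_eq in Hcont by
    (auto using Kinf_nonneg). auto.
Qed.

Lemma Kinf_surj y : 0 <= y -> exists x, 0 <= x /\ g x = y.
Proof.
  intros [Hy| <-]; [|exists 0; split; [lra|apply Kinf_0]].
  destruct (Kinf_unbounded y) as [X [HX HXy]].
  assert (HX0 : 0 < X) by (destruct HX as [|<-]; auto; rewrite Kinf_0 in HXy; lra).
  destruct (IVT (fun x => g (Rmax x 0) - y) 0 X) as [x [Hx Hgx]]; auto.
  - apply continuity_minus; [|apply continuity_const; intros ? ?; auto].
    apply continuity_Rmax0_comp, Kinf_cont.
  - rewrite Rmax_left, Kinf_0 by lra. lra.
  - rewrite Rmax_left by lra. lra.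
  - exists x. rewrite Rmax_left in Hgx by lra. split; lra.
Qed.

End KinfBasics.

Section KinfInverse.

Variable g : R -> R.
Hypothesis Hg : class_Kinf g.

Lemma Kinv_spec y : 0 <= y -> 0 <= Kinv g y /\ g (Kinv g y) = y.
Proof. intros Hy. unfold Kinv. apply ClassicalEpsilon.epsilon_spec, (Kinf_surj g Hg), Hy. Qed.

Lemma Kinv_K x : 0 <= x -> Kinv g (g x) = x.
Proof.
  intros Hx. destruct (Kinv_spec (g x)) as [Hinv Hgx]; [apply (Kinf_nonneg g Hg), Hx|].
  destruct (Rtotal_order (Kinv g (g x)) x) as [Hlt|[Heq|Hgt]]; auto.
  - apply (Kinf_lt g Hg) in Hlt; auto. lra.
  - apply (Kinf_lt g Hg) in Hgt; auto. lra.
Qed.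

Lemma Kinv_lt_of_lt y b : 0 <= y -> 0 <= b -> y < g b -> Kinv g y < b.
Proof.
  intros Hy Hb Hyb. destruct (Kinv_spec y Hy) as [Hinv Hgy].
  apply Rnot_le_lt. intros Hle. apply (Kinf_le g Hg b) in Hle; auto. lra.
Qed.

Lemma lt_Kinv_of_lt y a : 0 <= a -> g a < y -> a < Kinv g y.
Proof.
  intros Ha Hay. assert (Hy : 0 <= y) by (pose proof (Kinf_nonneg g Hg a Ha); lra).
  destruct (Kinv_spec y Hy) as [Hinv Hgy].
  apply Rnot_le_lt. intros Hle. apply (Kinf_le g Hg) in Hle; auto. lra.
Qed.

Lemma Kinv_lt y y' : 0 <= y -> y < y' -> Kinv g y < Kinv g y'.
Proof.
  intros Hy Hyy'. destruct (Kinv_spec y Hy) as [Hinv Hgy].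
  apply lt_Kinv_of_lt; lra.
Qed.

Lemma Kinv_cont : cont_Rplus (Kinv g).
Proof.
  intros y0 Hy0 eps Heps. destruct (Kinv_spec y0 Hy0) as [Hx0 Hgx0].
  set (x0 := Kinv g y0) in *.
  assert (Hup : y0 < g (x0 + eps)) by (rewrite <- Hgx0; apply (Kinf_lt g Hg); lra).
  assert (Hlow : exists dl, 0 < dl /\ forall y, 0 <= y -> Rabs (y - y0) < dl ->
                   x0 - eps < Kinv g y).
  { destruct (Rlt_le_dec (x0 - eps) 0) as [Hneg|Hnn].
    - exists 1. split; [lra|]. intros y Hy _. pose proof (proj1 (Kinv_spec y Hy)). lra.
    - assert (Hgl : g (x0 - eps) < y0) by (rewrite <- Hgx0; apply (Kinf_lt g Hg); lra).
      exists (y0 - g (x0 - eps)). split; [lra|]. intros y Hy Hyy0.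
      apply Rabs_lt_between' in Hyy0. apply lt_Kinv_of_lt; lra. }
  destruct Hlow as [dl [Hdl Hlow]].
  exists (Rmin (g (x0 + eps) - y0) dl). split; [apply Rmin_glb_lt; lra|].
  intros y Hy Hyy0. apply Rabs_lt_between'. split.
  - apply Hlow; auto. eapply Rlt_le_trans; [apply Hyy0|apply Rmin_r].
  - apply Kinv_lt_of_lt; [auto|lra|].
    assert (Hd : Rabs (y - y0) < g (x0 + eps) - y0) by
      (eapply Rlt_le_trans; [apply Hyy0|apply Rmin_l]).
    apply Rabs_lt_between' in Hd. lra.
Qed.

Lemma Kinf_comp_Kinv (f : R -> R) : class_Kinf f -> class_Kinf (fun r => f (Kinv g r)).
Proof.
  intros Hf. split; [split; [|split; [|split]]|].
  - intros x Hx eps Heps.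
    destruct (Kinf_cont f Hf (Kinv g x) (proj1 (Kinv_spec x Hx)) eps Heps) as [d1 [Hd1 Hf1]].
    destruct (Kinv_cont x Hx d1 Hd1) as [d2 [Hd2 Hinv]].
    exists d2. split; auto. intros y Hy Hyx. apply Hf1; auto. apply Kinv_spec, Hy.
  - replace (Kinv g 0) with 0; [apply (Kinf_0 f Hf)|].
    rewrite <- (Kinf_0 g Hg) at 2. symmetry. apply Kinv_K. lra.
  - intros x y Hx Hxy. apply (Kinf_lt f Hf); [apply Kinv_spec, Hx|]. apply Kinv_lt; auto.
  - intros x Hx. apply (Kinf_nonneg f Hf), Kinv_spec, Hx.
  - intros M. destruct (Kinf_unbounded f Hf M) as [x [Hx HM]].
    exists (g x). rewrite Kinv_K by auto. split; auto. apply (Kinf_nonneg g Hg), Hx.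
Qed.

End KinfInverse.

Lemma Kinf_half (g : R -> R) : class_Kinf g -> class_Kinf (fun x => g x / 2).
Proof.
  intros Hg. split; [split; [|split; [|split]]|].
  - intros x Hx eps Heps. destruct (Kinf_cont g Hg x Hx eps Heps) as [d [Hd Hgd]].
    exists d. split; auto. intros y Hy Hyx. specialize (Hgd y Hy Hyx).
    apply Rabs_lt_between in Hgd. apply Rabs_lt_between. lra.
  - rewrite (Kinf_0 g Hg). lra.
  - intros x y Hx Hxy. pose proof (Kinf_lt g Hg x y Hx Hxy). lra.
  - intros x Hx. pose proof (Kinf_nonneg g Hg x Hx). lra.
  - intros M. destruct (Kinf_unbounded g Hg (2 * M)) as [x [Hx HM]]. exists x. split; auto. lra.
Qed.

(** * Piecewise-linear interpolation *)

Definition clamp01 (y : R) : R := Rmax 0 (Rmin y 1).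

Lemma clamp01_abs y : clamp01 y = (Rabs y - Rabs (y - 1) + 1) / 2.
Proof.
  unfold clamp01, Rmax, Rmin, Rabs.
  repeat (destruct Rle_dec || destruct Rcase_abs); lra.
Qed.

Lemma clamp01_cont : continuity clamp01.
Proof.
  intros x. apply (continuity_pt_ext (fun y => (Rabs y - Rabs (y - 1) + 1) / 2)).
  { intros y. symmetry. apply clamp01_abs. }
  apply continuity_pt_div; [|apply continuity_pt_const; intros ? ?; auto|lra].
  apply continuity_pt_plus; [|apply continuity_pt_const; intros ? ?; auto].
  apply continuity_pt_minus; [apply Rcontinuity_abs|].
  apply (continuity_pt_comp (fun y => y - 1) Rabs); [|apply Rcontinuity_abs].
  apply continuity_pt_minus; [apply continuity_pt_id|apply continuity_pt_const; intros ? ?; auto].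
Qed.

Lemma clamp01_nonpos y : y <= 0 -> clamp01 y = 0.
Proof. intros Hy. unfold clamp01, Rmax, Rmin. repeat destruct Rle_dec; lra. Qed.

Lemma clamp01_ge1 y : 1 <= y -> clamp01 y = 1.
Proof. intros Hy. unfold clamp01, Rmax, Rmin. repeat destruct Rle_dec; lra. Qed.

Lemma clamp01_mono y z : y <= z -> clamp01 y <= clamp01 z.
Proof. intros Hyz. unfold clamp01, Rmax, Rmin. repeat destruct Rle_dec; lra. Qed.

Fixpoint interp_upto (a : nat -> R) (K : nat) (x : R) : R :=
  match K with
  | O => a O
  | S k => interp_upto a k x + (a (S k) - a k) * clamp01 (x - INR k)
  end.

(* The piecewise-linear function through the points [(n, a n)], equal to [a 0] on
   [(-oo, 0]]; on [(-oo, K]] the first [K] hat-increments already give it exactly. *)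
Definition interp (a : nat -> R) (x : R) : R := interp_upto a (Z.to_nat (up x)) x.

Lemma le_INR_up x : x <= INR (Z.to_nat (up x)).
Proof.
  destruct (archimed x) as [Hup _]. destruct (Z.lt_ge_cases (up x) 0) as [Hneg|Hnn].
  - assert (Z.to_nat (up x) = 0%nat) as -> by lia.
    apply IZR_lt in Hneg. simpl. lra.
  - rewrite INR_IZR_INZ, Z2Nat.id by lia. lra.
Qed.

Lemma interp_upto_stable a K K' x : x <= INR K -> (K <= K')%nat ->
  interp_upto a K' x = interp_upto a K x.
Proof.
  intros HxK HKK'. induction HKK' as [|K' HKK' IH]; auto.
  apply le_INR in HKK'. simpl. rewrite IH, clamp01_nonpos by lra. ring.
Qed.

Lemma interp_eq_upto a K x : x <= INR K -> interp a x = interp_upto a K x.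
Proof.
  intros HxK. unfold interp. pose proof (le_INR_up x) as Hx.
  destruct (Nat.le_ge_cases K (Z.to_nat (up x))); [|symmetry];
    apply interp_upto_stable; auto.
Qed.

Lemma interp_upto_top a m x : INR m <= x -> interp_upto a m x = a m.
Proof.
  induction m as [|m IH]; intros Hmx; simpl; auto. rewrite S_INR in Hmx.
  rewrite IH, clamp01_ge1 by lra. ring.
Qed.

Lemma interp_nat a m : interp a (INR m) = a m.
Proof. rewrite (interp_eq_upto a m) by lra. apply interp_upto_top. lra. Qed.

Lemma interp_cont a : continuity (interp a).
Proof.
  intros x0. set (K := Z.to_nat (up (x0 + 1))).
  assert (HK : x0 + 1 <= INR K) by apply le_INR_up.
  apply (continuity_pt_locally_ext (interp_upto a K)) with (a := 1); [lra| |].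
  - intros y Hy. unfold Rdist in Hy. apply Rabs_def2 in Hy.
    symmetry. apply interp_eq_upto. lra.
  - clear. induction K as [|K IH]; simpl.
    + apply continuity_pt_const. intros ? ?; auto.
    + apply continuity_pt_plus; auto. apply continuity_pt_mult.
      * apply continuity_pt_const. intros ? ?; auto.
      * apply (continuity_pt_comp (fun y => y - INR K) clamp01); [|apply clamp01_cont].
        apply continuity_pt_minus; [apply continuity_pt_id|].
        apply continuity_pt_const. intros ? ?; auto.
Qed.

Lemma interp_mono a x y : (forall n, a n <= a (S n)) -> x <= y -> interp a x <= interp a y.
Proof.
  intros Ha Hxy. set (K := Z.to_nat (up y)). assert (HyK : y <= INR K) by apply le_INR_up.
  rewrite (interp_eq_upto a K x), (interp_eq_upto a K y) by lra.
  clear HyK. induction K as [|K IH]; simpl; [lra|].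
  apply Rplus_le_compat; auto. apply Rmult_le_compat_l; [specialize (Ha K); lra|].
  apply clamp01_mono. lra.
Qed.

Lemma interp_opp a x : interp (fun n => - a n) x = - interp a x.
Proof. unfold interp. induction (Z.to_nat (up x)) as [|K IH]; simpl; [|rewrite IH]; ring. Qed.

Lemma interp_antitone a x y : (forall n, a (S n) <= a n) -> x <= y -> interp a y <= interp a x.
Proof.
  intros Ha Hxy. apply Ropp_le_cancel. rewrite <- !interp_opp.
  apply interp_mono; auto. intros n. specialize (Ha n). lra.
Qed.

Lemma interp_nonneg a x : (forall n, 0 <= a n) -> (forall n, a (S n) <= a n) -> 0 <= interp a x.
Proof.
  intros Ha0 Ha. specialize (Ha0 (Z.to_nat (up x))). rewrite <- interp_nat in Ha0.
  eapply Rle_trans; [apply Ha0|]. apply interp_antitone, le_INR_up; auto.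
Qed.

(** * A KL bound for a family of decaying sequences *)

Lemma exp_le_compat x y : x <= y -> exp x <= exp y.
Proof. intros [Hxy| ->]; [left; apply exp_increasing, Hxy|lra]. Qed.

Lemma continuity_2d_pt_eps f r t : continuity_2d_pt f r t ->
  forall eps, 0 < eps -> exists delta, 0 < delta /\ forall r' t',
    Rabs (r' - r) < delta -> Rabs (t' - t) < delta -> Rabs (f r' t' - f r t) < eps.
Proof.
  intros Hf eps Heps. destruct (Hf (mkposreal eps Heps)) as [d Hd].
  exists d. split; [apply cond_pos|]. exact Hd.
Qed.

Lemma continuity_2d_pt_Rmin f g r t : continuity_2d_pt f r t -> continuity_2d_pt g r t ->
  continuity_2d_pt (fun u v => Rmin (f u v) (g u v)) r t.
Proof.
  intros Hf Hg.
  apply (continuity_2d_pt_ext (fun u v => (f u v + g u v - Rabs (f u v - g u v)) * / 2)).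
  { intros u v. unfold Rmin, Rabs. destruct Rle_dec, Rcase_abs; lra. }
  apply continuity_2d_pt_mult; [|apply continuity_2d_pt_const].
  apply continuity_2d_pt_minus; [apply continuity_2d_pt_plus; auto|].
  apply (continuity_1d_2d_pt_comp Rabs); [apply Rcontinuity_abs|].
  apply continuity_2d_pt_minus; auto.
Qed.

Section KLBound.

Variable alpha : R -> R.
Variable h : nat -> nat -> R.
Hypothesis Halpha : class_Kinf alpha.
Hypothesis h_nonneg : forall k n, 0 <= h k n.
Hypothesis h_step : forall k n, h k (S n) <= h k n.
Hypothesis h_vanish : forall k eps, 0 < eps -> exists N, h k N <= eps.

Lemma h_antitone k m n : (m <= n)%nat -> h k n <= h k m.
Proof.
  induction 1 as [|n Hmn IH]; [lra|]. specialize (h_step k n). lra.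
Qed.

Fixpoint hmax (k n : nat) : R :=
  match k with O => h O n | S k' => Rmax (hmax k' n) (h (S k') n) end.

Lemma le_hmax k n : h k n <= hmax k n.
Proof. destruct k; simpl; [lra|apply Rmax_r]. Qed.

Lemma hmax_nonneg k n : 0 <= hmax k n.
Proof. eapply Rle_trans; [apply h_nonneg|apply le_hmax]. Qed.

Lemma hmax_antitone k m n : (m <= n)%nat -> hmax k n <= hmax k m.
Proof.
  intros Hmn. induction k; simpl; [apply h_antitone, Hmn|].
  apply Rmax_le_compat; auto. apply h_antitone, Hmn.
Qed.

Lemma hmax_mono k K n : (k <= K)%nat -> hmax k n <= hmax K n.
Proof.
  induction 1 as [|K HkK IH]; [lra|]. simpl. eapply Rle_trans; [apply IH|apply Rmax_l].
Qed.

Lemma hmax_vanish k eps : 0 < eps -> exists N, forall n, (N <= n)%nat -> hmax k n <= eps.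
Proof.
  intros Heps. induction k as [|k [N1 HN1]].
  - destruct (h_vanish 0 eps Heps) as [N HN]. exists N. intros n Hn.
    eapply Rle_trans; [apply h_antitone, Hn|apply HN].
  - destruct (h_vanish (S k) eps Heps) as [N2 HN2]. exists (Nat.max N1 N2). intros n Hn.
    apply Rmax_lub; [apply HN1; lia|].
    eapply Rle_trans; [apply h_antitone|apply HN2]. lia.
Qed.

Definition settle (k : nat) : nat :=
  ClassicalEpsilon.epsilon (inhabits O)
    (fun N => forall n, (N <= n)%nat -> hmax k n <= / (INR k + 1)).

Lemma settle_spec k n : (settle k <= n)%nat -> hmax k n <= / (INR k + 1).
Proof.
  revert n. unfold settle. apply ClassicalEpsilon.epsilon_spec, hmax_vanish.
  apply Rinv_0_lt_compat. pose proof (pos_INR k). lra.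
Qed.

Lemma inv_INR_succ_le k K : (k <= K)%nat -> / (INR K + 1) <= / (INR k + 1).
Proof.
  intros HkK. apply le_INR in HkK. pose proof (pos_INR k).
  apply Rinv_le_contravar; lra.
Qed.

(* Delaying the [k]-th sequence by [settle k] keeps the supremum over all [k] finite and
   still tending to 0. *)
Definition shifted_sup (m : nat) : R := nrm (fun k : nat => hmax k (m + settle k)).

Lemma le_shifted_sup k m : hmax k (m + settle k) <= shifted_sup m.
Proof.
  apply (le_nrm (fun k => hmax k (m + settle k))). split; [intros; apply hmax_nonneg|].
  exists 1. intros j. rewrite <- Rinv_1, <- (Rplus_0_l 1), <- INR_0.
  eapply Rle_trans; [apply settle_spec; lia|apply inv_INR_succ_le; lia].
Qed.

Lemma shifted_sup_step m : shifted_sup (S m) <= shifted_sup m.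
Proof.
  apply nrm_le_nonneg; [intros k; apply hmax_nonneg| |apply nrm_nonneg].
  intros k. eapply Rle_trans; [apply hmax_antitone|apply le_shifted_sup]. lia.
Qed.

Lemma shifted_sup_vanish eps : 0 < eps -> exists m, shifted_sup m <= eps.
Proof.
  intros Heps. pose proof (le_INR_up (/ eps)) as HupK. set (K := Z.to_nat (up (/ eps))) in HupK.
  assert (HK : / (INR K + 1) <= eps).
  { pose proof (pos_INR K).
    rewrite <- (Rinv_inv eps). apply Rinv_le_contravar; [apply Rinv_0_lt_compat|]; lra. }
  destruct (hmax_vanish K eps Heps) as [N HN]. exists N.
  apply nrm_le_nonneg; [intros k; apply hmax_nonneg| |lra]. intros k.
  destruct (Nat.le_ge_cases K k) as [HKk|HkK].
  - eapply Rle_trans; [apply settle_spec; lia|].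
    eapply Rle_trans; [apply inv_INR_succ_le, HKk|exact HK].
  - eapply Rle_trans; [apply (hmax_antitone k N); lia|].
    eapply Rle_trans; [apply hmax_mono, HkK|apply HN; lia].
Qed.

Definition tail_bound (s : R) : R := interp shifted_sup s + Rmax (- s) 0.

Lemma interp_shifted_sup_nonneg s : 0 <= interp shifted_sup s.
Proof. apply interp_nonneg; [intros; apply nrm_nonneg|apply shifted_sup_step]. Qed.

Lemma tail_bound_nonneg s : 0 <= tail_bound s.
Proof.
  pose proof (interp_shifted_sup_nonneg s). pose proof (Rmax_r (- s) 0).
  unfold tail_bound. lra.
Qed.

Lemma tail_bound_antitone x y : x <= y -> tail_bound y <= tail_bound x.
Proof.
  intros Hxy. unfold tail_bound. apply Rplus_le_compat.
  - apply interp_antitone; [apply shifted_sup_step|exact Hxy].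
  - apply Rle_max_compat_r. lra.
Qed.

Lemma tail_bound_cont : continuity tail_bound.
Proof.
  apply continuity_plus; [apply interp_cont|].
  apply (continuity_comp Ropp (fun x => Rmax x 0)).
  { intros x. apply (continuity_pt_opp id), continuity_pt_id. }
  apply (continuity_Rmax0_comp (fun x => x)).
  intros x _ eps Heps. exists eps. split; auto.
Qed.

Lemma tail_bound_vanish eps : 0 < eps -> exists t0, forall t, t0 <= t -> tail_bound t <= eps.
Proof.
  intros Heps. destruct (shifted_sup_vanish eps Heps) as [m Hm].
  exists (Rmax (INR m) 0). intros t Ht. unfold tail_bound.
  rewrite Rmax_right by (pose proof (Rmax_r (INR m) 0); lra).
  rewrite Rplus_0_r. rewrite <- interp_nat in Hm. eapply Rle_trans; [|exact Hm].
  apply interp_antitone; [apply shifted_sup_step|]. pose proof (Rmax_l (INR m) 0). lra.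
Qed.

Lemma hmax_le_tail_bound k n x :
  INR (settle k) + hmax k O <= x -> hmax k n <= tail_bound (INR n - x).
Proof.
  intros Hx. pose proof (interp_shifted_sup_nonneg (INR n - x)).
  destruct (Nat.lt_ge_cases n (settle k)) as [Hn|Hn].
  - apply lt_INR in Hn. pose proof (hmax_antitone k 0 n ltac:(lia)).
    pose proof (Rmax_l (- (INR n - x)) 0). unfold tail_bound. lra.
  - pose proof (hmax_nonneg k O).
    replace n with ((n - settle k) + settle k)%nat at 1 by lia.
    eapply Rle_trans; [apply le_shifted_sup|]. rewrite <- interp_nat.
    eapply Rle_trans; [apply (interp_antitone _ (INR n - x)); [apply shifted_sup_step|]|].
    + rewrite minus_INR by lia. lra.
    + pose proof (Rmax_r (- (INR n - x)) 0). unfold tail_bound. lra.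
Qed.

Definition lag_seq (k : nat) : R := sum_f_R0 (fun j => INR (settle j) + hmax j O) k.

Definition lag (r : R) : R := interp (fun j => lag_seq (S j)) r.

Lemma lag_seq_step k : lag_seq k + (INR (settle (S k)) + hmax (S k) O) = lag_seq (S k).
Proof. reflexivity. Qed.

Lemma lag_seq_nonneg k : 0 <= lag_seq k.
Proof.
  apply cond_pos_sum. intros j. pose proof (pos_INR (settle j)). pose proof (hmax_nonneg j O). lra.
Qed.

Lemma lag_mono x y : x <= y -> lag x <= lag y.
Proof.
  apply interp_mono. intros n. rewrite <- (lag_seq_step (S n)).
  pose proof (pos_INR (settle (S (S n)))). pose proof (hmax_nonneg (S (S n)) O). lra.
Qed.

Lemma lag_ge r : 0 <= r -> exists k, r <= INR k /\ INR (settle k) + hmax k O <= lag r.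
Proof.
  intros Hr. destruct (nfloor_ex r Hr) as [j [Hjr Hrj]].
  exists (S j). split; [rewrite S_INR; lra|].
  eapply Rle_trans; [|apply (lag_mono _ _ Hjr)]. unfold lag. rewrite interp_nat.
  rewrite <- lag_seq_step. pose proof (lag_seq_nonneg j). lra.
Qed.

(* By [lag_ge] and [hmax_le_tail_bound] the [Rmin] term dominates every admissible bound;
   the term [alpha r * exp (- t)] only makes the envelope strictly decreasing in [t], and
   [Rmax r 0] makes it continuous on the whole plane. *)
Definition KL_envelope (r t : R) : R :=
  alpha (Rmax r 0) * exp (- t) + Rmin (alpha (Rmax r 0)) (tail_bound (t - lag r)).

Lemma KL_envelope_cont r t : continuity_2d_pt KL_envelope r t.
Proof.
  assert (Ha : continuity_2d_pt (fun u v => alpha (Rmax u 0)) r t).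
  { apply (continuity_1d_2d_pt_comp (fun u => alpha (Rmax u 0)) (fun u v => u)).
    - apply continuity_Rmax0_comp, Kinf_cont, Halpha.
    - apply continuity_2d_pt_id1. }
  assert (He : continuity_2d_pt (fun u v => exp (- v)) r t).
  { apply (continuity_1d_2d_pt_comp (fun v => exp (- v)) (fun u v => v)).
    - apply derivable_continuous_pt. reg.
    - apply continuity_2d_pt_id2. }
  assert (Hd : continuity_2d_pt (fun u v => tail_bound (v - lag u)) r t).
  { apply (continuity_1d_2d_pt_comp tail_bound (fun u v => v - lag u)); [apply tail_bound_cont|].
    apply continuity_2d_pt_minus; [apply continuity_2d_pt_id2|].
    apply (continuity_1d_2d_pt_comp lag (fun u v => u)).
    - apply interp_cont.
    - apply continuity_2d_pt_id1. }
  apply continuity_2d_pt_plus; [apply continuity_2d_pt_mult; auto|].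
  apply continuity_2d_pt_Rmin; auto.
Qed.

Lemma KL_envelope_nonneg r t : 0 <= r -> 0 <= KL_envelope r t.
Proof.
  intros Hr. unfold KL_envelope. rewrite Rmax_left by lra.
  pose proof (Kinf_nonneg alpha Halpha r Hr). pose proof (exp_pos (- t)).
  pose proof (tail_bound_nonneg (t - lag r)).
  assert (0 <= Rmin (alpha r) (tail_bound (t - lag r))) by (apply Rmin_glb; lra). nra.
Qed.

Lemma KL_envelope_0 t : KL_envelope 0 t = 0.
Proof.
  unfold KL_envelope. rewrite Rmax_left, (Kinf_0 alpha Halpha) by lra.
  rewrite Rmin_left by apply tail_bound_nonneg. ring.
Qed.

Lemma KL_envelope_lt_r x y t : 0 <= x -> x < y -> KL_envelope x t < KL_envelope y t.
Proof.
  intros Hx Hxy. unfold KL_envelope. rewrite !Rmax_left by lra.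
  pose proof (Kinf_lt alpha Halpha x y Hx Hxy). pose proof (exp_pos (- t)).
  assert (Htail : tail_bound (t - lag x) <= tail_bound (t - lag y)).
  { apply tail_bound_antitone. pose proof (lag_mono x y (Rlt_le _ _ Hxy)). lra. }
  assert (Rmin (alpha x) (tail_bound (t - lag x)) <= Rmin (alpha y) (tail_bound (t - lag y))).
  { apply Rmin_glb; [eapply Rle_trans; [apply Rmin_l|lra]|].
    eapply Rle_trans; [apply Rmin_r|exact Htail]. }
  nra.
Qed.

Lemma KL_envelope_lt_t r t t' : 0 < r -> t < t' -> KL_envelope r t' < KL_envelope r t.
Proof.
  intros Hr Htt'. unfold KL_envelope. rewrite Rmax_left by lra.
  pose proof (Kinf_pos alpha Halpha r Hr).
  assert (exp (- t') < exp (- t)) by (apply exp_increasing; lra).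
  assert (Htail : tail_bound (t' - lag r) <= tail_bound (t - lag r))
    by (apply tail_bound_antitone; lra).
  assert (Rmin (alpha r) (tail_bound (t' - lag r)) <= Rmin (alpha r) (tail_bound (t - lag r)))
    by (apply Rle_min_compat_l, Htail).
  nra.
Qed.

Lemma KL_envelope_vanish r eps : 0 < r -> 0 < eps ->
  exists T, forall t, T <= t -> KL_envelope r t < eps.
Proof.
  intros Hr Heps. pose proof (Kinf_pos alpha Halpha r Hr) as Har.
  destruct (tail_bound_vanish (eps / 3) ltac:(lra)) as [t0 Ht0].
  set (kappa := eps / (3 * alpha r)).
  assert (Hkappa : 0 < kappa) by (apply Rdiv_lt_0_compat; lra).
  exists (Rmax (t0 + lag r) (- ln kappa)). intros t Ht.
  pose proof (Rmax_l (t0 + lag r) (- ln kappa)). pose proof (Rmax_r (t0 + lag r) (- ln kappa)).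
  assert (Hexp : exp (- t) <= kappa).
  { rewrite <- (exp_ln kappa Hkappa). apply exp_le_compat. lra. }
  assert (Htail : tail_bound (t - lag r) <= eps / 3) by (apply Ht0; lra).
  assert (alpha r * exp (- t) <= eps / 3).
  { apply (Rmult_le_compat_l (alpha r)) in Hexp; [|lra].
    unfold kappa in Hexp. replace (alpha r * (eps / (3 * alpha r))) with (eps / 3) in Hexp
      by (field; lra). exact Hexp. }
  unfold KL_envelope. rewrite Rmax_left by lra.
  pose proof (Rmin_r (alpha r) (tail_bound (t - lag r))). lra.
Qed.

Lemma KL_envelope_KL : class_KL KL_envelope.
Proof.
  assert (Hcont : forall r t eps, 0 < eps -> exists delta, 0 < delta /\ forall r' t',
    Rabs (r' - r) < delta -> Rabs (t' - t) < delta ->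
    Rabs (KL_envelope r' t' - KL_envelope r t) < eps)
    by (intros r t; apply continuity_2d_pt_eps, KL_envelope_cont).
  assert (Hdiag : forall x d, 0 < d -> Rabs (x - x) < d)
    by (intros x d Hd; rewrite Rminus_diag, Rabs_R0; exact Hd).
  split; [|split; [|split]].
  - intros r t _ _ eps Heps. destruct (Hcont r t eps Heps) as [d [Hd Hrt]].
    exists d. split; auto.
  - intros r t Hr _. apply KL_envelope_nonneg, Hr.
  - intros t _. split; [|split; [|split]].
    + intros r _ eps Heps. destruct (Hcont r t eps Heps) as [d [Hd Hrt]].
      exists d. split; auto.
    + apply KL_envelope_0.
    + intros x y Hx Hxy. apply KL_envelope_lt_r; auto.
    + intros r Hr. apply KL_envelope_nonneg, Hr.
  - intros r Hr. split; [|split].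
    + intros t _ eps Heps. destruct (Hcont r t eps Heps) as [d [Hd Hrt]].
      exists d. split; auto.
    + intros t t' _ Htt'. apply KL_envelope_lt_t; auto.
    + intros eps Heps. apply KL_envelope_vanish; auto.
Qed.

Lemma KL_envelope_bound r y n : 0 <= r -> y <= alpha r ->
  (forall k, r <= INR k -> y <= h k n) -> y <= KL_envelope r (INR n).
Proof.
  intros Hr Hyr Hyh. destruct (lag_ge r Hr) as [k [Hrk Hlag]].
  assert (Hyd : y <= tail_bound (INR n - lag r)).
  { eapply Rle_trans; [apply Hyh, Hrk|]. eapply Rle_trans; [apply le_hmax|].
    apply hmax_le_tail_bound, Hlag. }
  unfold KL_envelope. rewrite Rmax_left by lra.
  pose proof (Kinf_nonneg alpha Halpha r Hr). pose proof (exp_pos (- INR n)).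
  assert (y <= Rmin (alpha r) (tail_bound (INR n - lag r))) by (apply Rmin_glb; auto). nra.
Qed.

End KLBound.

Lemma KL_bound_of_decaying_family (alpha : R -> R) (h : nat -> nat -> R) :
  class_Kinf alpha -> (forall k n, 0 <= h k n) -> (forall k n, h k (S n) <= h k n) ->
  (forall k eps, 0 < eps -> exists N, h k N <= eps) ->
  exists beta, class_KL beta /\ forall r y n, 0 <= r -> y <= alpha r ->
    (forall k, r <= INR k -> y <= h k n) -> y <= beta r (INR n).
Proof.
  intros Halpha Hnn Hstep Hvanish. exists (KL_envelope alpha h). split.
  - apply KL_envelope_KL; auto.
  - intros r y n. apply KL_envelope_bound; auto.
Qed.

Lemma list_bounded {A : Type} (f : A -> R) (l : list A) :
  exists M, forall x, In x l -> f x <= M.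
Proof.
  induction l as [|x l [M HM]].
  - exists 0. intros ? [].
  - exists (Rmax (f x) M). intros y [<-|Hy]; [apply Rmax_l|].
    eapply Rle_trans; [apply HM, Hy|apply Rmax_r].
Qed.

Section GainOperator.

Context {I : Type} (Ii : I -> list I) (gam : I -> I -> R -> R) (mu : I -> (I -> R) -> Rbar).
Hypothesis HGam : is_gain_operator Ii gam mu.

Definition gain_arg (i : I) (s : I -> R) : I -> R :=
  fun j => if excluded_middle_informative (In j (Ii i)) then gam i j (s j) else 0.

Lemma gain_arg_linf i s : vnonneg s -> linf_plus (gain_arg i s).
Proof.
  intros Hs. destruct HGam as (_ & HgK & _).
  assert (Hnn : forall j, In j (Ii i) -> 0 <= gam i j (s j)).
  { intros j Hj. apply (Kinf_nonneg _ (HgK i j Hj)), Hs. }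
  destruct (list_bounded (fun j => gam i j (s j)) (Ii i)) as [M HM].
  split; unfold gain_arg.
  - intros j. destruct excluded_middle_informative; auto with real.
  - exists (Rmax M 0). intros j. destruct excluded_middle_informative.
    + eapply Rle_trans; [apply HM; auto|apply Rmax_l].
    + apply Rmax_r.
Qed.

Lemma Gam_finite i s : vnonneg s -> Finite (Gam Ii gam mu s i) = mu i (gain_arg i s).
Proof.
  intros Hs. destruct HGam as (_ & _ & _ & _ & _ & _ & HM3 & _).
  apply (proj1 (HM3 i (Ii i))); [apply gain_arg_linf, Hs|].
  intros j Hj. unfold gain_arg. destruct excluded_middle_informative; tauto.
Qed.

Lemma Gam_nonneg s : vnonneg s -> vnonneg (Gam Ii gam mu s).
Proof.
  intros Hs i. destruct HGam as (_ & _ & _ & Hmu & _).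
  specialize (Hmu i _ (gain_arg_linf i s Hs)).
  rewrite <- Gam_finite in Hmu by auto. exact Hmu.
Qed.

Lemma Gam_mono s t : vnonneg s -> vle s t -> vle (Gam Ii gam mu s) (Gam Ii gam mu t).
Proof.
  intros Hs Hst i.
  assert (Ht : vnonneg t) by (intros j; specialize (Hs j); specialize (Hst j); lra).
  destruct HGam as (_ & HgK & _ & _ & _ & HM2 & _).
  assert (Hle : Rbar_le (mu i (gain_arg i s)) (mu i (gain_arg i t))).
  { apply HM2; auto using gain_arg_linf.
    intros j. unfold gain_arg. destruct excluded_middle_informative as [Hj|]; [|lra].
    apply (Kinf_le _ (HgK i j Hj)); auto. }
  rewrite <- !Gam_finite in Hle by auto. exact Hle.
Qed.

Lemma Gam_rho_nonneg rho s :
  class_Kinf rho -> vnonneg s -> vnonneg (Gam_rho Ii gam mu rho s).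
Proof.
  intros Hrho Hs i. unfold Gam_rho. pose proof (Gam_nonneg s Hs i) as HGs.
  pose proof (Kinf_nonneg rho Hrho _ HGs). lra.
Qed.

Lemma Gam_rho_mono rho s t : class_Kinf rho -> vnonneg s -> vle s t ->
  vle (Gam_rho Ii gam mu rho s) (Gam_rho Ii gam mu rho t).
Proof.
  intros Hrho Hs Hst i. unfold Gam_rho.
  pose proof (Gam_nonneg s Hs i) as Hs0. pose proof (Gam_mono s t Hs Hst i) as Hst0.
  pose proof (Kinf_le rho Hrho _ _ Hs0 Hst0). lra.
Qed.

End GainOperator.

Section MonotoneIteration.

Context {I : Type} (T : (I -> R) -> I -> R).
Hypothesis T_nonneg : forall s, vnonneg s -> vnonneg (T s).
Hypothesis T_mono : forall s t, vnonneg s -> vle s t -> vle (T s) (T t).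

Lemma iter_nonneg n s : vnonneg s -> vnonneg (Nat.iter n T s).
Proof. induction n; simpl; auto. Qed.

Lemma iter_mono n s t : vnonneg s -> vle s t -> vle (Nat.iter n T s) (Nat.iter n T t).
Proof. induction n; simpl; auto using iter_nonneg. Qed.

Lemma iter_antitone x : vnonneg x -> vle (T x) x ->
  forall m n, (m <= n)%nat -> vle (Nat.iter n T x) (Nat.iter m T x).
Proof.
  intros Hx HTx.
  assert (Hstep : forall n, vle (Nat.iter (S n) T x) (Nat.iter n T x)).
  { induction n; [exact HTx|]. apply T_mono; [apply (iter_nonneg (S n)), Hx|exact IHn]. }
  intros m n Hmn i. induction Hmn as [|n Hmn IH]; [lra|].
  specialize (Hstep n i). lra.
Qed.

End MonotoneIteration.

Lemma real_induction_down (Q : R -> Prop) a b : a <= b -> Q b ->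
  (forall L, a < L -> (forall e, 0 < e -> exists r, L <= r < L + e /\ Q r) ->
     exists r', a <= r' < L /\ Q r') ->
  forall e, 0 < e -> exists r, a <= r < a + e /\ Q r.
Proof.
  intros Hab Qb Hstep e He. apply NNPP. intros Hnone.
  set (E := fun x => forall r, a <= r < x -> ~ Q r).
  assert (HE : E (a + e)) by (intros r Hr HQ; apply Hnone; exists r; auto).
  assert (Hbound : bound E).
  { exists b. intros x Hx. apply Rnot_lt_le. intros Hbx. apply (Hx b); auto. }
  destruct (completeness E Hbound (ex_intro _ _ HE)) as [L [HLub HLlub]].
  assert (HaL : a + e <= L) by (apply HLub, HE).
  assert (Hbelow : forall r, a <= r < L -> ~ Q r).
  { intros r Hr HQ. destruct (classic (exists x, E x /\ r < x)) as [[x [Ex Hx]]|Hno].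
    - apply (Ex r); auto. lra.
    - enough (L <= r) by lra. apply HLlub. intros x Ex.
      apply Rnot_lt_le. intros Hrx. apply Hno. eauto. }
  assert (Habove : forall e', 0 < e' -> exists r, L <= r < L + e' /\ Q r).
  { intros e' He'. apply NNPP. intros Hno.
    enough (HEL : E (L + e')) by (pose proof (HLub _ HEL); lra).
    intros r Hr HQ. destruct (Rlt_le_dec r L).
    - apply (Hbelow r); auto. lra.
    - apply Hno. exists r. split; auto. lra. }
  destruct (Hstep L ltac:(lra) Habove) as [r' [Hr' HQ]]. apply (Hbelow r'); auto.
Qed.

(** * Paths of strict decay *)

Lemma half_gain_margin (rho : R -> R) : class_Kinf rho -> forall m, 0 < m ->
  exists eta, 0 < eta /\ forall x g, m <= x -> 0 <= g -> g + rho g <= x ->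
    g + rho g / 2 <= x - eta.
Proof.
  intros Hrho m Hm. destruct (Kinf_small rho Hrho (m / 2) ltac:(lra)) as [d [Hd Hsmall]].
  set (c := Rmin (d / 2) (m / 4)).
  assert (Hc : 0 < c) by (apply Rmin_glb_lt; lra).
  assert (Hcm : c <= m / 4) by apply Rmin_r.
  assert (Hrc : rho c < m / 2) by (apply Hsmall; split; [lra|]; unfold c;
    eapply Rle_lt_trans; [apply Rmin_l|lra]).
  pose proof (Kinf_pos rho Hrho c Hc).
  exists (Rmin (rho c / 2) (m / 4)). split; [apply Rmin_glb_lt; lra|].
  intros x g Hx Hg Hgx.
  pose proof (Rmin_l (rho c / 2) (m / 4)). pose proof (Rmin_r (rho c / 2) (m / 4)).
  (* Either the margin rho g / 2 is at least rho c / 2, or g + rho g / 2 < m / 2. *)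
  destruct (Rle_lt_dec c g) as [Hcg|Hgc].
  - pose proof (Kinf_le rho Hrho c g ltac:(lra) Hcg). lra.
  - pose proof (Kinf_le rho Hrho g c Hg ltac:(lra)). lra.
Qed.

Section DecayPath.

Context {I : Type} (Ii : I -> list I) (gam : I -> I -> R -> R) (mu : I -> (I -> R) -> Rbar).
Variables (sigma : R -> I -> R) (rho phimin phimax : R -> R).
Hypothesis HGam : is_gain_operator Ii gam mu.
Hypothesis Hrho : class_Kinf rho.
Hypothesis Hphimin : class_Kinf phimin.
Hypothesis Hphimax : class_Kinf phimax.
Hypothesis sigma_decay : forall r, 0 <= r -> vle (Gam_rho Ii gam mu rho (sigma r)) (sigma r).
Hypothesis sigma_bounds : forall r, 0 <= r -> forall i, phimin r <= sigma r i <= phimax r.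
Hypothesis sigma_cont : forall r, 0 <= r -> forall eps, 0 < eps -> exists delta, 0 < delta /\
  forall r', 0 <= r' -> Rabs (r' - r) < delta -> nrm (vsub (sigma r') (sigma r)) < eps.

Local Notation T := (Gam_rho Ii gam mu (fun x => rho x / 2)).

Lemma sigma_nonneg r : 0 <= r -> vnonneg (sigma r).
Proof.
  intros Hr i. pose proof (sigma_bounds r Hr i). pose proof (Kinf_nonneg phimin Hphimin r Hr). lra.
Qed.

Lemma sigma_cont_pointwise r : 0 <= r -> forall eps, 0 < eps -> exists delta, 0 < delta /\
  forall r', 0 <= r' -> Rabs (r' - r) < delta -> forall i, Rabs (sigma r' i - sigma r i) < eps.
Proof.
  intros Hr eps Heps. destruct (sigma_cont r Hr eps Heps) as [d [Hd Hsd]].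
  exists d. split; auto. intros r' Hr' Hrr' i.
  eapply Rle_lt_trans; [|apply (Hsd r' Hr' Hrr')].
  apply (Rabs_le_nrm (vsub (sigma r') (sigma r))). exists (phimax r' + phimax r). intros j.
  pose proof (sigma_bounds r Hr j). pose proof (sigma_bounds r' Hr' j).
  pose proof (sigma_nonneg r Hr j). pose proof (sigma_nonneg r' Hr' j).
  unfold vsub. apply Rabs_le_between. lra.
Qed.

Lemma T_nonneg s : vnonneg s -> vnonneg (T s).
Proof. apply Gam_rho_nonneg, Kinf_half; auto. Qed.

Lemma T_mono s t : vnonneg s -> vle s t -> vle (T s) (T t).
Proof. apply Gam_rho_mono, Kinf_half; auto. Qed.

Lemma T_sigma_decay a : 0 < a ->
  exists eta, 0 < eta /\ forall r, a <= r -> forall i, T (sigma r) i <= sigma r i - eta.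
Proof.
  intros Ha. destruct (half_gain_margin rho Hrho (phimin a) (Kinf_pos phimin Hphimin a Ha))
    as [eta [Heta Hmargin]].
  exists eta. split; auto. intros r Har i. apply Hmargin.
  - pose proof (sigma_bounds r ltac:(lra) i).
    pose proof (Kinf_le phimin Hphimin a r ltac:(lra) Har). lra.
  - apply Gam_nonneg, sigma_nonneg; auto. lra.
  - apply sigma_decay. lra.
Qed.

Lemma T_sigma_le r : 0 <= r -> vle (T (sigma r)) (sigma r).
Proof.
  intros Hr i. pose proof (sigma_decay r Hr i). unfold Gam_rho in *.
  pose proof (Gam_nonneg Ii gam mu HGam _ (sigma_nonneg r Hr) i) as HGs.
  pose proof (Kinf_nonneg rho Hrho _ HGs). lra.
Qed.

Lemma T_sigma_step L : 0 < L -> exists d, 0 < d /\ forall r r', 0 <= r' ->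
  Rabs (r - L) < d -> Rabs (r' - L) < d -> vle (T (sigma r)) (sigma r').
Proof.
  intros HL. destruct (T_sigma_decay (L / 2) ltac:(lra)) as [eta [Heta Hdecay]].
  destruct (sigma_cont_pointwise L ltac:(lra) (eta / 2) ltac:(lra)) as [d [Hd Hcont]].
  exists (Rmin d (L / 2)). split; [apply Rmin_glb_lt; lra|].
  intros r r' Hr' Hr Hrr' i.
  pose proof (Rmin_l d (L / 2)). pose proof (Rmin_r d (L / 2)).
  apply Rabs_lt_between' in Hr.
  assert (Hr0 : 0 <= r) by lra.
  pose proof (Hdecay r ltac:(lra) i).
  pose proof (Rabs_def2 _ _ (Hcont r Hr0 ltac:(apply Rabs_lt_between'; lra) i)).
  pose proof (Rabs_def2 _ _ (Hcont r' Hr' ltac:(eapply Rlt_le_trans; [apply Hrr'|lra]) i)).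
  lra.
Qed.

Lemma decay_path_descent (Q : R -> Prop) a b : 0 <= a <= b -> Q b ->
  (forall r r', 0 <= r -> a <= r' -> Q r -> vle (T (sigma r)) (sigma r') -> Q r') ->
  forall e, 0 < e -> exists r, a <= r < a + e /\ Q r.
Proof.
  intros [Ha Hab] Qb Hclosed. apply (real_induction_down Q a b Hab Qb).
  intros L HaL Hnear. destruct (T_sigma_step L ltac:(lra)) as [d [Hd Hstep]].
  destruct (Hnear d Hd) as [r [Hr HQr]].
  set (r' := Rmax a (L - d / 2)).
  assert (Hr'L : r' < L) by (apply Rmax_lub_lt; lra).
  assert (Har' : a <= r') by apply Rmax_l.
  assert (Hr'd : L - d / 2 <= r') by apply Rmax_r.
  exists r'. split; [lra|]. apply (Hclosed r); [lra|exact Har'|exact HQr|].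
  apply Hstep; [lra| |]; apply Rabs_lt_between'; split; lra.
Qed.

Lemma iter_sigma_antitone r m n : 0 <= r -> (m <= n)%nat ->
  vle (Nat.iter n T (sigma r)) (Nat.iter m T (sigma r)).
Proof.
  intros Hr. apply iter_antitone; auto using T_nonneg, T_mono, sigma_nonneg, T_sigma_le.
Qed.

Lemma iter_sigma_nonneg r n : 0 <= r -> vnonneg (Nat.iter n T (sigma r)).
Proof. intros Hr. apply iter_nonneg; auto using T_nonneg, sigma_nonneg. Qed.

Lemma iter_sigma_linf r n : 0 <= r -> linf_plus (Nat.iter n T (sigma r)).
Proof.
  intros Hr. split; [apply iter_sigma_nonneg, Hr|]. exists (phimax r). intros i.
  eapply Rle_trans; [apply (iter_sigma_antitone r 0 n); auto; lia|]. apply sigma_bounds, Hr.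
Qed.

Lemma iter_sigma_vanish r0 : 0 <= r0 -> forall eps, 0 < eps ->
  exists N, forall i, Nat.iter N T (sigma r0) i <= eps.
Proof.
  intros Hr0 eps Heps.
  set (Q := fun r => exists N, vle (Nat.iter N T (sigma r0)) (sigma r)).
  assert (HQ : forall e, 0 < e -> exists r, 0 <= r < 0 + e /\ Q r).
  { apply (decay_path_descent Q 0 r0); [lra|exists O; intros i; simpl; lra|].
    intros r r' Hr _ [N HN] Hstep. exists (S N). intros i.
    eapply Rle_trans; [|apply Hstep]. apply T_mono; auto. apply iter_sigma_nonneg, Hr0. }
  destruct (Kinf_small phimax Hphimax eps Heps) as [d [Hd Hsmall]].
  destruct (HQ d Hd) as [r [Hr [N HN]]]. exists N. intros i.
  pose proof (HN i). pose proof (sigma_bounds r ltac:(lra) i).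
  pose proof (Hsmall r ltac:(lra)). lra.
Qed.

Lemma le_sigma_Kinv s x : linf_plus s -> nrm s <= x -> vle s (sigma (Kinv phimin x)).
Proof.
  intros Hs Hsx i. assert (Hx : 0 <= x) by (pose proof (nrm_nonneg s); lra).
  destruct (Kinv_spec phimin Hphimin x Hx) as [Hinv Hphi].
  pose proof (le_nrm s i Hs). pose proof (sigma_bounds _ Hinv i). lra.
Qed.

Lemma decay_path_MBI s b : linf_plus s -> linf_plus b ->
  (forall i, s i <= Rmax (b i) (T s i)) -> nrm s <= phimax (Kinv phimin (nrm b)).
Proof.
  intros Hs Hb Hsb. pose proof (nrm_nonneg b) as Hb0.
  destruct (Kinv_spec phimin Hphimin (nrm b) Hb0) as [Ha Hphia].
  set (a := Kinv phimin (nrm b)) in *.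
  destruct (Kinf_unbounded phimin Hphimin (Rmax (nrm s) (nrm b))) as [X [HX HXs]].
  pose proof (Rmax_l (nrm s) (nrm b)). pose proof (Rmax_r (nrm s) (nrm b)).
  assert (HaX : a <= X) by (left; apply (Kinv_lt_of_lt phimin Hphimin); auto; lra).
  assert (HQ : forall e, 0 < e -> exists r, a <= r < a + e /\ vle s (sigma r)).
  { apply (decay_path_descent _ a X); [lra| |].
    - rewrite <- (Kinv_K phimin Hphimin X HX). apply le_sigma_Kinv; auto. lra.
    - intros r r' Hr Har' Hsr Hstep i. specialize (Hsb i).
      assert (b i <= sigma r' i).
      { pose proof (le_nrm b i Hb). pose proof (sigma_bounds r' ltac:(lra) i).
        pose proof (Kinf_le phimin Hphimin a r' Ha Har'). lra. }
      assert (T s i <= sigma r' i).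
      { pose proof (T_mono s (sigma r) (proj1 Hs) Hsr i). specialize (Hstep i). lra. }
      eapply Rle_trans; [apply Hsb|]. apply Rmax_lub; auto. }
  apply nrm_le_nonneg; [exact (proj1 Hs)| |apply (Kinf_nonneg phimax Hphimax), Ha].
  intros i. apply Rnot_lt_le. intros Hlt.
  destruct (Kinf_cont phimax Hphimax a Ha (s i - phimax a) ltac:(lra)) as [d [Hd Hcont]].
  destruct (HQ d Hd) as [r [Hr Hsr]].
  pose proof (Hsr i). pose proof (sigma_bounds r ltac:(lra) i).
  assert (Hphir : Rabs (phimax r - phimax a) < s i - phimax a)
    by (apply Hcont; [lra|apply Rabs_lt_between'; lra]).
  apply Rabs_def2 in Hphir. lra.
Qed.

Lemma decay_path_UGAS : UGAS T.
Proof.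
  set (h := fun k n : nat => nrm (Nat.iter n T (sigma (Kinv phimin (INR k))))).
  assert (Hk : forall k : nat, 0 <= Kinv phimin (INR k))
    by (intros k; apply (Kinv_spec phimin Hphimin), pos_INR).
  destruct (KL_bound_of_decaying_family (fun r => phimax (Kinv phimin r)) h)
    as [beta [HKL Hbeta]].
  - apply Kinf_comp_Kinv; auto.
  - intros k n. apply nrm_nonneg.
  - intros k n. apply nrm_mono; auto using iter_sigma_nonneg, iter_sigma_linf.
    apply iter_sigma_antitone; auto.
  - intros k eps Heps. destruct (iter_sigma_vanish _ (Hk k) eps Heps) as [N HN].
    exists N. apply nrm_le_nonneg; auto using iter_sigma_nonneg. lra.
  - exists beta. split; auto. intros s Hs n. pose proof (nrm_nonneg s) as Hr.
    assert (Hiter : forall x, nrm s <= x ->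
              vle (Nat.iter n T s) (Nat.iter n T (sigma (Kinv phimin x)))).
    { intros x Hx. apply iter_mono; auto using T_nonneg, T_mono, le_sigma_Kinv. exact (proj1 Hs). }
    apply nrm_le_nonneg.
    + apply iter_nonneg; auto using T_nonneg. exact (proj1 Hs).
    + intros i. apply Hbeta; auto.
      * destruct (Kinv_spec phimin Hphimin (nrm s) Hr) as [Ha _].
        eapply Rle_trans; [apply (Hiter _ (Rle_refl _))|].
        eapply Rle_trans; [apply (iter_sigma_antitone _ 0 n); auto; lia|].
        apply sigma_bounds, Ha.
      * intros k Hsk. eapply Rle_trans; [apply (Hiter _ Hsk)|].
        apply le_nrm, iter_sigma_linf, Hk.
    + destruct HKL as (_ & Hbeta_nonneg & _). apply Hbeta_nonneg; auto using pos_INR.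
Qed.

End DecayPath.

Theorem theorem3p7 (I : Type) (enum : nat -> I) (enum_surj : forall i : I, exists n, enum n = i)
  (Ii : I -> list I) (gam : I -> I -> R -> R) (mu : I -> (I -> R) -> Rbar)
  (HGam : is_gain_operator Ii gam mu)
  (sigma : R -> (I -> R))
  (Hcont : forall r, 0 <= r -> forall eps, 0 < eps -> exists delta, 0 < delta /\
     forall r', 0 <= r' -> Rabs (r' - r) < delta -> nrm (vsub (sigma r') (sigma r)) < eps)
  (Hdecay : exists rho_t, class_Kinf rho_t /\
     forall r, 0 <= r -> forall i, Gam_rho Ii gam mu rho_t (sigma r) i <= sigma r i)
  (Hbounds : exists phimin phimax, class_Kinf phimin /\ class_Kinf phimax /\
     forall r, 0 <= r -> forall i, phimin r <= sigma r i <= phimax r) :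
  exists rho, class_Kinf rho /\
    UGAS (Gam_rho Ii gam mu rho) /\ oplus_MBI (Gam_rho Ii gam mu rho).
Proof.
  destruct Hdecay as [rho [Hrho Hsigma]].
  destruct Hbounds as [phimin [phimax [Hphimin [Hphimax Hsigma_bounds]]]].
  exists (fun x => rho x / 2). split; [apply Kinf_half, Hrho|split].
  - apply (decay_path_UGAS Ii gam mu sigma rho phimin phimax); auto.
  - exists (fun r => phimax (Kinv phimin r)). split; [apply Kinf_comp_Kinv; auto|].
    intros s b Hs Hb Hsb. apply (decay_path_MBI Ii gam mu sigma rho phimin phimax); auto.
Qed.
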